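(* Let $P$ be a finite poset. For every $k=0,1,\ldots,\#P$, the $k$-chain distribution $\mathrm{chain}(k)$ on the distributive lattice $J(P)$ is toggle-symmetric.
   Context: $J(P)$ is the set of order ideals (down-closed subsets) of $P$ ordered by inclusion. A $k$-chain of $J(P)$ is $I_0\subsetneq I_1\subsetneq\cdots\subsetneq I_k$; $\mathrm{chain}(k)$ gives $I\in J(P)$ probability $\#\{k\text{-chains containing } I\}/((k+1)\#\{k\text{-chains of } J(P)\})$. For $p\in P$ and $I\in J(P)$: $\mathcal{T}^+_p(I)=1$ if $p\notin I$ and $p$ is a minimal element of $P\setminus I$, else $0$; $\mathcal{T}^-_p(I)=1$ if $p\in I$ and $p$ is a maximal element of $I$, else $0$. A distribution $\mu$ on $J(P)$ is toggle-symmetric if $\mathbb{E}(\mu;\mathcal{T}^+_p)=\mathbb{E}(\mu;\mathcal{T}^-_p)$ for all $p\in P$, where $\mathbb{E}(\mu;f)=\sum_I f(I)\mathbb{P}(\mu;I)$. *)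

From HB Require Import structures.
From mathcomp Require Import all_boot all_order all_algebra.
Set Implicit Arguments. Unset Strict Implicit. Unset Printing Implicit Defensive.
Import Order.TTheory GRing.Theory Num.Theory.

Section Defs.
Variables (d : Order.disp_t) (P : finPOrderType d).

Definition is_ideal (I : {set P}) : bool :=
  [forall x : P, forall y : P, ((x \in I) && (y <= x)%O) ==> (y \in I)].

Definition kchain (k : nat) (c : {ffun 'I_k.+1 -> {set P}}) : bool :=
  [forall i, is_ideal (c i)] &&
  [forall i : 'I_k.+1, forall j : 'I_k.+1, (i < j)%N ==> (c i \proper c j)].

Definition num_kchains (k : nat) : nat := #|[set c : {ffun 'I_k.+1 -> {set P}} | kchain c]|.

Definition num_kchains_containing (k : nat) (I : {set P}) : nat :=
  #|[set c : {ffun 'I_k.+1 -> {set P}} | kchain c & [exists i, c i == I]]|.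

Definition chain_prob (k : nat) (I : {set P}) : rat :=
  ((num_kchains_containing k I)%:R / ((k.+1 * num_kchains k)%N)%:R)%R.

Definition Tplus (p : P) (I : {set P}) : bool :=
  (p \notin I) && [forall q : P, (q \notin I) ==> ~~ (q < p)%O].

Definition Tminus (p : P) (I : {set P}) : bool :=
  (p \in I) && [forall q : P, (q \in I) ==> ~~ (p < q)%O].

Definition expect (mu : {set P} -> rat) (f : {set P} -> bool) : rat :=
  (\sum_(I : {set P} | is_ideal I) (f I)%:R * mu I)%R.

Definition toggle_symmetric (mu : {set P} -> rat) : Prop :=
  forall p : P, expect mu (Tplus p) = expect mu (Tminus p).

End Defs.

From mathcomp Require Import all_boot all_order all_algebra.
From mathcomp Require Import zify.
Set Implicit Arguments. Unset Strict Implicit. Unset Printing Implicit Defensive.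
Import Order.TTheory GRing.Theory.

(* A k-chain I_0 < ... < I_k of order ideals is determined by its level function
   f x = min {i | x \in I_i} (k+1 if there is no such i): f is monotone, bounded
   by k+1 and takes every value 1..k, and conversely the sublevel sets of such an
   f form a k-chain.  On this chain T^+_p holds at I_i exactly when lo <= i < f p,
   and T^-_p exactly when f p <= i < hi, where lo is the largest level strictly
   below p (0 if none) and hi the least level strictly above p (k+1 if none).
   Summed over all chains, the two expectations are therefore the sums of
   f p - lo and of hi - f p, and the involution on level functions reflecting
   f p to lo + hi - f p (which leaves lo and hi unchanged) exchanges them. *)

Lemma sum_ord_lt n m : m <= n -> \sum_(i < n) (i < m) = m.
Proof.
move=> le_mn; rewrite -[RHS]card_ord -sum1_card.
rewrite (big_ord_widen n (fun=> 1) le_mn) [RHS]big_mkcond.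
by apply: eq_bigr => i _; case: (i < m).
Qed.

Lemma sum_ord_interval n a b : a <= b <= n -> \sum_(i < n) (a <= i < b) = b - a.
Proof.
case/andP=> le_ab le_bn.
rewrite -[b in RHS](sum_ord_lt le_bn) -[a in RHS](sum_ord_lt (leq_trans le_ab le_bn)).
rewrite -sumnB => [|i _]; first by apply: eq_bigr => i _; case: ltnP; case: ltnP; lia.
by case: ltnP => // lt_ia; rewrite (leq_trans lt_ia le_ab).
Qed.

Lemma mono_bool_count n (b : 'I_n -> bool) :
  {homo b : i j / i <= j >-> (i ==> j)} ->
  forall i, b i = (\sum_(j < n) ~~ b j <= i).
Proof.
move=> b_mono i; apply/idP/idP => [b_i | ].
  rewrite -[X in _ <= X](sum_ord_lt (ltnW (ltn_ord i))); apply: leq_sum => j _.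
  by case: ltnP => [_|le_ij]; rewrite ?leq_b1 // (implyP (b_mono _ _ le_ij) b_i).
apply: contraLR => nb_i; rewrite -ltnNge -[X in X <= _](sum_ord_lt (ltn_ord i)).
apply: leq_sum => j _; case: ltnP => //= le_ji; rewrite lt0b; apply/negP => b_j.
by rewrite (implyP (b_mono _ _ le_ji) b_j) in nb_i.
Qed.

Definition slide (a b u : nat) : nat :=
  if a < u <= b then u.-1 else if b <= u < a then u.+1 else u.

Ltac slide_arith := rewrite /slide; repeat case: ifP => ?; lia.

Lemma slide_id a b u : (u < minn a b) || (maxn a b < u) -> slide a b u = u.
Proof. move=> ?; slide_arith. Qed.

Lemma slide_neq a b u : u != b -> slide b a u != a.
Proof. move=> /eqP ?; apply/eqP; slide_arith. Qed.

Lemma slide_homo a b u w : u <= w -> u != a -> w != a -> slide a b u <= slide a b w.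
Proof. move=> ? /eqP ? /eqP ?; slide_arith. Qed.

Lemma slide_le m a b u : a <= m -> b <= m -> u <= m -> slide a b u <= m.
Proof. move=> ? ? ?; slide_arith. Qed.

Lemma slide_range m a b u :
  0 < a <= m -> 0 < b <= m -> 0 < u <= m -> 0 < slide a b u <= m.
Proof. move=> ? ? ?; slide_arith. Qed.

Lemma slideK a b u : u != b -> slide a b (slide b a u) = u.
Proof.
move=> /eqP ?; rewrite [slide b a u]/slide.
case: ifP => ?; [|case: ifP => ?]; slide_arith.
Qed.

Section KChains.
Variables (d : Order.disp_t) (P : finPOrderType d) (k : nat).
Local Notation n := k.+1.
Implicit Types (I : {set P}) (f : {ffun P -> nat}) (c : {ffun 'I_n -> {set P}}) (i j : 'I_n).

Lemma is_idealP I : reflect (forall x y, (y <= x)%O -> x \in I -> y \in I) (is_ideal I).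
Proof.
apply: (iffP forallP) => [I_ideal x y le_yx x_in | I_ideal x].
  by move/forallP/(_ y)/implyP: (I_ideal x); apply; rewrite x_in le_yx.
by apply/forallP => y; apply/implyP => /andP [x_in le_yx]; apply: I_ideal le_yx x_in.
Qed.

Lemma kchain_ideal c i : kchain c -> is_ideal (c i).
Proof. by case/andP=> /forallP. Qed.

Lemma kchain_proper c i j : kchain c -> i < j -> c i \proper c j.
Proof. by case/andP=> _ /forallP/(_ i)/forallP/(_ j)/implyP. Qed.

Lemma kchain_subset c i j : kchain c -> i <= j -> c i \subset c j.
Proof.
move=> c_chain; rewrite leq_eqVlt => /orP [/eqP/val_inj -> | lt_ij]; first exact: subxx.
exact: proper_sub (kchain_proper c_chain lt_ij).
Qed.

Lemma kchain_inj c : kchain c -> injective c.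
Proof.
move=> c_chain i j eq_ij; apply: val_inj.
case: (ltngtP i j) => // [lt_ij | lt_ji].
  by have := kchain_proper c_chain lt_ij; rewrite eq_ij properxx.
by have := kchain_proper c_chain lt_ji; rewrite eq_ij properxx.
Qed.

(* [level c x] is the least [i] with [x \in c i], or [k.+1] if there is none. *)
Definition level c : {ffun P -> nat} := [ffun x => \sum_(i < n) (x \notin c i)].

Definition sublevels f : {ffun 'I_n -> {set P}} := [ffun i : 'I_n => [set x | f x <= i]].

Record level_fun f : Prop := LevelFun {
  level_fun_le : forall x, f x <= n;
  level_fun_homo : {homo f : x y / (x <= y)%O >-> x <= y};
  level_fun_onto : forall v, 0 < v <= k -> exists x, f x = v }.

Lemma mem_kchain c i x : kchain c -> (x \in c i) = (level c x <= i).
Proof.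
move=> c_chain; rewrite ffunE; apply: (@mono_bool_count n (fun j => x \in c j) _ i).
by move=> j l le_jl; apply/implyP/(subsetP (kchain_subset c_chain le_jl)).
Qed.

Lemma level_le c x : level c x <= n.
Proof.
rewrite ffunE; apply: (@leq_trans (\sum_(i < n) 1)); last by rewrite sum1_card card_ord.
by apply: leq_sum => i _; apply: leq_b1.
Qed.

Lemma kchain_level_fun c : kchain c -> level_fun (level c).
Proof.
move=> c_chain; split=> [|x y le_xy|v /andP [v_gt0 le_vk]]; first exact: level_le.
  have [lt_yn|] := ltnP (level c y) n; last exact: leq_trans (level_le c x).
  have y_in : y \in c (Ordinal lt_yn) by rewrite (mem_kchain _ _ c_chain).
  have := is_idealP _ (kchain_ideal _ c_chain) _ _ le_xy y_in.
  by rewrite (mem_kchain _ _ c_chain).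
have lt_vn : v < n by [].
have lt_v1n : v.-1 < n by lia.
have lt_v1v : Ordinal lt_v1n < Ordinal lt_vn by rewrite /=; lia.
have [_ [x x_in x_out]] := properP (kchain_proper c_chain lt_v1v).
by exists x; move: x_in x_out; rewrite !(mem_kchain _ _ c_chain) /=; lia.
Qed.

Lemma sublevelsE f i x : (x \in sublevels f i) = (f x <= i).
Proof. by rewrite ffunE inE. Qed.

Lemma level_fun_kchain f : level_fun f -> kchain (sublevels f).
Proof.
case=> _ f_homo f_onto; apply/andP; split.
  apply/forallP => i; apply/is_idealP => x y /f_homo le_fyx.
  by rewrite !sublevelsE; apply: leq_trans.
apply/forallP => i; apply/forallP => j; apply/implyP => lt_ij; apply/properP; split.
  by apply/subsetP => x; rewrite !sublevelsE => /leq_trans; apply; apply: ltnW.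
have [x fx] : exists x, f x = j by apply: f_onto; have := ltn_ord j; lia.
by exists x; rewrite !sublevelsE fx // -ltnNge.
Qed.

Lemma sublevelsK f : (forall x, f x <= n) -> level (sublevels f) = f.
Proof.
move=> f_le; apply/ffunP => x; rewrite ffunE.
under eq_bigr do rewrite sublevelsE -ltnNge.
exact: sum_ord_lt.
Qed.

Lemma levelK c : kchain c -> sublevels (level c) = c.
Proof.
by move=> c_chain; apply/ffunP => i; apply/setP => x; rewrite sublevelsE (mem_kchain _ _ c_chain).
Qed.

End KChains.

Section Toggle.
Variables (d : Order.disp_t) (P : finPOrderType d) (k : nat) (p : P).
Local Notation n := k.+1.
Implicit Types (f : {ffun P -> nat}) (c : {ffun 'I_n -> {set P}}) (i : 'I_n).

Definition level_below f := \max_(q | (q < p)%O) f q.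

(* The least level strictly above [p], or [n] if there is none; written with
   [\max] because the natural numbers have no top element for [\min]. *)
Definition level_above f := n - \max_(q | (p < q)%O) (n - f q).

Lemma level_below_ge f q : (q < p)%O -> f q <= level_below f.
Proof. by move=> lt_qp; rewrite /level_below; apply: leq_bigmax_cond. Qed.

Lemma level_below_leP f m : reflect (forall q, (q < p)%O -> f q <= m) (level_below f <= m).
Proof. by rewrite /level_below; apply: bigmax_leqP. Qed.

Lemma level_above_gtP f m : (forall x, f x <= n) -> m < n ->
  reflect (forall q, (p < q)%O -> m < f q) (m < level_above f).
Proof.
move=> f_le lt_mn; rewrite /level_above.
have -> : (m < n - \max_(q | (p < q)%O) (n - f q)) = (\max_(q | (p < q)%O) (n - f q) <= k - m).
  by apply/idP/idP; lia.
apply: (iffP (bigmax_leqP _ (k - m) (fun q => n - f q))) => le_f q /le_f;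
by have := f_le q; lia.
Qed.

Lemma level_below_le f : level_fun k f -> level_below f <= f p.
Proof. by case=> _ f_homo _; apply/level_below_leP => q /ltW/f_homo. Qed.

Lemma level_above_le f q : level_fun k f -> (p < q)%O -> level_above f <= f q.
Proof.
case=> f_le _ _ lt_pq.
have := @leq_bigmax_cond _ (fun q => (p < q)%O) (fun q => n - f q) q lt_pq.
by rewrite /level_above; have := f_le q; lia.
Qed.

Lemma level_above_bounds f : level_fun k f -> f p <= level_above f <= n.
Proof.
case=> f_le f_homo _; rewrite /level_above.
have : \max_(q | (p < q)%O) (n - f q) <= n - f p.
  by apply/bigmax_leqP => q /ltW/f_homo; lia.
by have := f_le p; lia.
Qed.

Lemma Tplus_sublevels f i : Tplus p (sublevels k f i) = (level_below f <= i < f p).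
Proof.
rewrite /Tplus sublevelsE -ltnNge andbC; congr (_ && _).
apply/forallP/level_below_leP => [T_q q lt_qp | le_fi q].
  by move: (T_q q); rewrite sublevelsE lt_qp implybF negbK.
by rewrite sublevelsE; apply/implyP; apply: contra; apply: le_fi.
Qed.

Lemma Tminus_sublevels f i : (forall x, f x <= n) ->
  Tminus p (sublevels k f i) = (f p <= i < level_above f).
Proof.
move=> f_le; rewrite /Tminus sublevelsE; congr (_ && _).
apply/forallP/(level_above_gtP f_le (ltn_ord i)) => [T_q q lt_pq | lt_if q].
  by move: (T_q q); rewrite sublevelsE lt_pq implybF -ltnNge.
by rewrite sublevelsE; apply/implyP; apply: contraL => /lt_if; rewrite ltnNge.
Qed.

Lemma sum_Tplus_sublevels f : level_fun k f ->
  \sum_(i < n) Tplus p (sublevels k f i) = f p - level_below f.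
Proof.
move=> f_lev; under eq_bigr do rewrite Tplus_sublevels.
by apply: sum_ord_interval; rewrite level_below_le // level_fun_le.
Qed.

Lemma sum_Tminus_sublevels f : level_fun k f ->
  \sum_(i < n) Tminus p (sublevels k f i) = level_above f - f p.
Proof.
move=> f_lev; have f_le := level_fun_le f_lev.
under eq_bigr do rewrite (Tminus_sublevels _ f_le).
exact/sum_ord_interval/level_above_bounds.
Qed.

Definition alone f := (0 < f p <= k) && [forall x, (x != p) ==> (f x != f p)].

Definition mirror_level f := level_below f + level_above f - f p.

(* If [p] is alone on an inner level, moving it would empty that level, so the
   levels between the old and the new position of [p] slide by one. *)
Definition toggle_level f : {ffun P -> nat} :=
  [ffun x => if x == p then mirror_level f
             else if alone f then slide (f p) (mirror_level f) (f x) else f x].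

Lemma toggle_levelE f x : toggle_level f x = if x == p then mirror_level f
  else if alone f then slide (f p) (mirror_level f) (f x) else f x.
Proof. by rewrite ffunE. Qed.

Lemma toggle_level_p f : toggle_level f p = mirror_level f.
Proof. by rewrite toggle_levelE eqxx. Qed.

Lemma alone_neq f x : alone f -> x != p -> f x != f p.
Proof. by case/andP=> _ /forallP/(_ x)/implyP. Qed.

Lemma alone_bounds f : level_fun k f -> alone f -> level_below f < f p < level_above f.
Proof.
move=> f_lev f_alone; have [f_le f_homo _] := f_lev.
have /andP [/andP [fp_gt0 fp_le_k] _] := f_alone.
apply/andP; split.
  suff : level_below f <= (f p).-1 by lia.
  apply/level_below_leP => q lt_qp; have := f_homo _ _ (ltW lt_qp).
  by have /eqP := alone_neq f_alone (negbT (lt_eqF lt_qp)); lia.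
apply/(level_above_gtP f_le fp_le_k) => q lt_pq.
by rewrite ltn_neqAle eq_sym alone_neq ?(negbT (gt_eqF lt_pq)) ?f_homo ?ltW.
Qed.

Lemma toggle_level_comparable f q : level_fun k f -> (q < p)%O || (p < q)%O ->
  toggle_level f q = f q.
Proof.
move=> f_lev q_cmp; rewrite toggle_levelE.
have -> : (q == p) = false by case/orP: q_cmp => [/lt_eqF | /gt_eqF].
case: ifP => // f_alone; apply: slide_id.
have /andP [? ?] := alone_bounds f_lev f_alone.
case/orP: q_cmp => [/(level_below_ge f) | /(level_above_le f_lev)]; rewrite /mirror_level; lia.
Qed.

Lemma level_below_toggle f : level_fun k f -> level_below (toggle_level f) = level_below f.
Proof.
by move=> f_lev; apply: eq_bigr => q lt_qp; rewrite toggle_level_comparable ?lt_qp.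
Qed.

Lemma level_above_toggle f : level_fun k f -> level_above (toggle_level f) = level_above f.
Proof.
move=> f_lev; congr (_ - _); apply: eq_bigr => q lt_pq.
by rewrite toggle_level_comparable ?lt_pq ?orbT.
Qed.

Lemma toggle_level_le f : level_fun k f -> forall x, toggle_level f x <= n.
Proof.
move=> f_lev x; have [f_le _ _] := f_lev.
have ? := level_below_le f_lev; have /andP [_ ?] := level_above_bounds f_lev.
rewrite toggle_levelE /mirror_level; case: eqP => _; first lia.
case: ifP => [f_alone|_]; last exact: f_le.
by apply: slide_le; rewrite ?f_le //; lia.
Qed.

Lemma toggle_level_homo f : level_fun k f ->
  {homo toggle_level f : x y / (x <= y)%O >-> x <= y}.
Proof.
move=> f_lev x y; have [_ f_homo _] := f_lev.
case: (eqVneq x p) => [-> | x_p]; case: (eqVneq y p) => [-> | y_p] // le_xy.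
- have lt_py : (p < y)%O by rewrite lt_def y_p.
  rewrite toggle_level_p toggle_level_comparable ?lt_py ?orbT //.
  have := level_above_le f_lev lt_py; have := level_below_le f_lev.
  by rewrite /mirror_level; lia.
- have lt_xp : (x < p)%O by rewrite lt_def eq_sym x_p.
  rewrite toggle_level_p toggle_level_comparable ?lt_xp //.
  have := level_below_ge f lt_xp; have /andP [? _] := level_above_bounds f_lev.
  by rewrite /mirror_level; lia.
rewrite !toggle_levelE (negbTE x_p) (negbTE y_p); case: ifP => f_alone; last exact: f_homo.
by apply: slide_homo; rewrite ?f_homo ?alone_neq.
Qed.

Lemma toggle_level_onto f : level_fun k f ->
  forall v, 0 < v <= k -> exists x, toggle_level f x = v.
Proof.
move=> f_lev v v_range; have [_ _ f_onto] := f_lev.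
case: (eqVneq v (mirror_level f)) => [-> | v_mirror].
  by exists p; rewrite toggle_level_p.
have [f_alone | f_not_alone] := boolP (alone f).
  have /andP [/andP [? ?] _] := f_alone; have /andP [? ?] := alone_bounds f_lev f_alone.
  have /andP [_ ?] := level_above_bounds f_lev.
  have [|x fx] := f_onto (slide (mirror_level f) (f p) v).
    by apply: slide_range => //; rewrite /mirror_level; lia.
  have x_p : x != p by apply: contra_neq (slide_neq (f p) v_mirror) => x_p; rewrite -fx x_p.
  by exists x; rewrite toggle_levelE (negbTE x_p) f_alone fx slideK.
have [x fx] := f_onto v v_range.
case: (eqVneq x p) => [x_p | x_p]; last first.
  by exists x; rewrite toggle_levelE (negbTE x_p) (negbTE f_not_alone).
subst x; have := f_not_alone; rewrite /alone fx v_range negb_forall => /existsP [y].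
rewrite negb_imply negbK => /andP [y_p /eqP fy].
by exists y; rewrite toggle_levelE (negbTE y_p) (negbTE f_not_alone) fy.
Qed.

Lemma toggle_level_fun f : level_fun k f -> level_fun k (toggle_level f).
Proof.
move=> f_lev; split;
  [exact: toggle_level_le | exact: toggle_level_homo | exact: toggle_level_onto].
Qed.

Lemma alone_toggle f : level_fun k f -> alone (toggle_level f) = alone f.
Proof.
move=> f_lev; have [_ _ f_onto] := f_lev.
have [f_alone | f_not_alone] := boolP (alone f).
  have /andP [? ?] := alone_bounds f_lev f_alone.
  have /andP [_ ?] := level_above_bounds f_lev.
  apply/andP; split; first by rewrite toggle_level_p /mirror_level; lia.
  apply/forallP => x; apply/implyP => x_p.
  by rewrite toggle_levelE (negbTE x_p) f_alone toggle_level_p slide_neq ?alone_neq.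
apply/negbTE/negP => /andP [mirror_range /forallP toggle_ne].
rewrite toggle_level_p in mirror_range toggle_ne.
have f_ne x : x != p -> f x != mirror_level f.
  move=> x_p; have := implyP (toggle_ne x) x_p.
  by rewrite toggle_levelE (negbTE x_p) (negbTE f_not_alone).
case: (eqVneq (mirror_level f) (f p)) => [mirror_fp | mirror_fp].
  case/negP: f_not_alone; rewrite /alone -mirror_fp mirror_range.
  by apply/forallP => x; apply/implyP/f_ne.
have [y fy] := f_onto _ mirror_range.
have y_p : y != p by apply: contra_neq mirror_fp => y_p; rewrite -fy y_p.
by have := f_ne y y_p; rewrite fy eqxx.
Qed.

Lemma toggle_levelK f : level_fun k f -> toggle_level (toggle_level f) = f.
Proof.
move=> f_lev; have ? := level_below_le f_lev; have /andP [? _] := level_above_bounds f_lev.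
have mirrorK : mirror_level (toggle_level f) = f p.
  rewrite {1}/mirror_level level_below_toggle // level_above_toggle //.
  by rewrite toggle_level_p /mirror_level; lia.
apply/ffunP => x; rewrite toggle_levelE mirrorK alone_toggle //.
case: (eqVneq x p) => [-> // | x_p].
rewrite toggle_level_p toggle_levelE (negbTE x_p) /=.
by case: ifP => f_alone; rewrite f_alone ?slideK ?alone_neq.
Qed.

Definition toggle_chain c := if kchain c then sublevels k (toggle_level (level c)) else c.

Lemma kchain_toggle c : kchain (toggle_chain c) = kchain c.
Proof.
rewrite /toggle_chain; case: ifP => // c_chain.
exact/level_fun_kchain/toggle_level_fun/kchain_level_fun.
Qed.

Lemma toggle_chainK : involutive toggle_chain.
Proof.
move=> c; have [c_chain | c_not] := boolP (kchain c); last first.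
  by rewrite /toggle_chain (negbTE c_not) (negbTE c_not).
have c_lev := kchain_level_fun c_chain.
rewrite {1}/toggle_chain kchain_toggle c_chain /toggle_chain c_chain.
by rewrite sublevelsK ?toggle_levelK ?levelK //; case: (toggle_level_fun c_lev).
Qed.

Lemma sum_Tplus_kchains :
  \sum_(c | kchain c) \sum_(i < n) Tplus p (c i) =
  \sum_(c | kchain c) \sum_(i < n) Tminus p (c i).
Proof.
rewrite (reindex_inj (inv_inj toggle_chainK)) /=.
apply: eq_big => [c | c]; first exact: kchain_toggle.
rewrite kchain_toggle => c_chain; have c_lev := kchain_level_fun c_chain.
rewrite /toggle_chain c_chain -[c in RHS](levelK c_chain).
have toggle_lev := toggle_level_fun c_lev.
rewrite sum_Tplus_sublevels // sum_Tminus_sublevels //.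
rewrite level_below_toggle // toggle_level_p /mirror_level.
by have := level_below_le c_lev; have := level_above_bounds c_lev; lia.
Qed.

End Toggle.

Section Expectation.
Variables (d : Order.disp_t) (P : finPOrderType d) (k : nat).
Local Notation chain := {ffun 'I_k.+1 -> {set P}}.
Implicit Types (I : {set P}) (c : chain).

Lemma num_kchains_containingE I :
  num_kchains_containing k I = \sum_(c : chain | kchain c) [exists i, c i == I].
Proof.
rewrite /num_kchains_containing -sum1dep_card big_mkcondr /=.
by apply: eq_bigr => c _; case: existsP.
Qed.

Lemma sum_ideals_kchain (F : {set P} -> nat) c : kchain c ->
  \sum_(I | is_ideal I) [exists i, c i == I] * F I = \sum_(i < k.+1) F (c i).
Proof.
move=> c_chain; transitivity (\sum_(I in c @: setT) F I).
  rewrite big_mkcond [RHS]big_mkcond; apply: eq_bigr => I _.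
  have -> : (I \in c @: setT) = [exists i, c i == I].
    by apply/imsetP/existsP => [[i _ ->] | [i /eqP <-]]; exists i.
  case: existsP => [[i /eqP <-] | _]; last by case: ifP.
  by rewrite (kchain_ideal i c_chain) /= mul1n.
rewrite big_imset => [|i j _ _ /(kchain_inj c_chain)] //.
by apply: eq_bigl => i; rewrite in_setT.
Qed.

Lemma sum_kchains_containing (F : {set P} -> nat) :
  \sum_(I | is_ideal I) F I * num_kchains_containing k I =
  \sum_(c : chain | kchain c) \sum_(i < k.+1) F (c i).
Proof.
under eq_bigr do rewrite num_kchains_containingE big_distrr /=.
rewrite exchange_big /=; apply: eq_bigr => c c_chain.
by rewrite -(sum_ideals_kchain F c_chain); apply: eq_bigr => I _; rewrite mulnC.
Qed.

Lemma expect_chain_prob (T : {set P} -> bool) :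
  expect (chain_prob k) T =
  ((\sum_(c : chain | kchain c) \sum_(i < k.+1) T (c i))%:R / (k.+1 * @num_kchains _ P k)%:R)%R.
Proof.
rewrite /expect /chain_prob -(sum_kchains_containing (fun I => T I)) natr_sum mulr_suml.
by apply: eq_bigr => I _; rewrite (natrM _ (T I)) mulrA.
Qed.

End Expectation.

Theorem lemma3p3 (d : Order.disp_t) (P : finPOrderType d) (k : nat) :
  (k <= #|P|)%N -> @toggle_symmetric d P (@chain_prob d P k).
Proof. by move=> _ p; rewrite !expect_chain_prob sum_Tplus_kchains. Qed.
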